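(* Let $R$ be an integral domain and $f\in R[[X]]$. (1) If $f$ is irreducible in $R[[X]]$, then $(f_0)\neq R$, and for any $a,b\in R$ with $f_0=ab$ and $(a,b)=R$ one has $(a)=R$ or $(b)=R$. Conversely, if $(f_1)=R$, $(f_0)\ne R$, and for all $a,b\in R$ with $f_0=ab$ and $(a,b)=R$ one has $(a)=R$ or $(b)=R$, then $f$ is irreducible in $R[[X]]$. (2) If $R$ is a PID and $f$ is irreducible in $R[[X]]$, then either $(f)=(X)$ or $f_0$ is associate to a power of a prime element of $R$. (3) If $R$ is a UFD but not a PID, then there exist irreducible elements of $R[[X]]$ whose constant term is neither zero nor associate to a power of a prime; in fact, if $\pi,\sigma\in R$ are nonassociate primes with $(\pi,\sigma)\neq R$, then $\pi\sigma+XU$ is irreducible in $R[[X]]$ for every unit $U\in R[[X]]$.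
   Context: $f_i$ denotes the coefficient of $X^i$ in $f$. A nonzero element $a$ is prime if $(a)$ is a prime ideal. *)

From mathcomp Require Import all_boot all_order all_algebra.
Set Implicit Arguments. Unset Strict Implicit. Unset Printing Implicit Defensive.
Import Order.TTheory GRing.Theory Num.Theory.
Local Open Scope ring_scope.

Section Defs.
Variable R : idomainType.

Definition powser := nat -> R.
Definition ps_eq (f g : powser) : Prop := forall n, f n = g n.
Definition ps_C (c : R) : powser := fun n => if n == 0%N then c else 0.
Definition ps_zero : powser := ps_C 0.
Definition ps_one : powser := ps_C 1.
Definition ps_X : powser := fun n => if n == 1%N then 1 else 0.
Definition ps_add (f g : powser) : powser := fun n => f n + g n.
Definition ps_mul (f g : powser) : powser :=
  fun n => \sum_(i < n.+1) f i * g (n - i)%N.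

Definition ps_unit (f : powser) : Prop := exists g, ps_eq (ps_mul f g) ps_one.
Definition ps_irreducible (f : powser) : Prop :=
  ~ ps_eq f ps_zero /\ ~ ps_unit f /\
  forall g h, ps_eq f (ps_mul g h) -> ps_unit g \/ ps_unit h.
Definition ps_assoc (f g : powser) : Prop :=
  exists u, ps_unit u /\ ps_eq f (ps_mul u g).

Definition rdvd (a b : R) : Prop := exists c, b = c * a.
Definition rassoc (a b : R) : Prop := exists u, u \is a GRing.unit /\ a = u * b.
Definition comaximal (a b : R) : Prop := exists u v, u * a + v * b = 1.
Definition prime_elt (a : R) : Prop :=
  a != 0 /\ a \isn't a GRing.unit /\
  forall x y, rdvd a (x * y) -> rdvd a x \/ rdvd a y.
Definition irreducible_elt (a : R) : Prop :=
  a != 0 /\ a \isn't a GRing.unit /\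
  forall b c, a = b * c -> b \is a GRing.unit \/ c \is a GRing.unit.

Definition is_ideal (I : R -> Prop) : Prop :=
  I 0 /\ (forall x y, I x -> I y -> I (x + y)) /\ (forall r x, I x -> I (r * x)).
Definition is_PID : Prop :=
  forall I, is_ideal I -> exists a, forall x, I x <-> rdvd a x.
Definition all_irr (s : seq R) : Prop := forall p, p \in s -> irreducible_elt p.
Definition is_UFD : Prop :=
  (forall a, a != 0 -> a \isn't a GRing.unit ->
     exists s : seq R, all_irr s /\ a = \prod_(p <- s) p) /\
  (forall s t : seq R, all_irr s -> all_irr t ->
     rassoc (\prod_(p <- s) p) (\prod_(p <- t) p) ->
     size s = size t /\
     exists sigma : 'I_(size s) -> 'I_(size t), bijective sigma /\
       forall i : 'I_(size s), rassoc (nth 0 s i) (nth 0 t (sigma i))).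
End Defs.

From mathcomp Require Import all_boot all_order all_algebra.
From mathcomp Require Import zify ring.
From Stdlib Require Import Classical ClassicalEpsilon.
Import GRing.Theory.
Local Open Scope ring_scope.
Set Implicit Arguments. Unset Strict Implicit. Unset Printing Implicit Defensive.

(* (1) Coefficientwise, a factorization f = g h is a Hensel lifting problem:
   once g_0 h_0 = f_0 with u g_0 + v h_0 = 1, the equation for the n-th
   coefficient is linear in (g_n, h_n) with coefficient matrix (h_0, g_0), so
   it can always be solved. Hence a comaximal splitting of f_0 lifts to one of
   f, and irreducibility of f forces one factor to be a unit. Conversely,
   f_1 = g_0 h_1 + g_1 h_0, so if f_1 is a unit then (g_0, h_0) = R.
   (2) In a PID let f_0 be comaximally indecomposable and p a prime divisor
   of it, and let (c) be the ideal of all z with f_0 | z p^k for some k.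
   Then f_0 = c e and p^k = g e for some k and g; p does not divide c, so
   (c, p^k) = R and hence (c, e) = R. As p | f_0, e is not a unit, so c is,
   and f_0 is associate to the divisor e of p^k.
   (3) A UFD in which any two nonassociate primes are comaximal has gcds that
   are Bezout combinations, hence is a PID; so a non-PID UFD has nonassociate
   primes pi, sigma with (pi, sigma) <> R, and pi sigma is then comaximally
   indecomposable without being associate to a prime power. *)

Section CourseOfValues.
Variables (T : Type) (x0 : T) (step : nat -> (nat -> T) -> T).

(* [cov_rec] solves u 0 = x0, u n.+1 = step n u for a [step] that reads only
   u 0, ..., u n; [cov_prefix n] lists u 0, ..., u n. *)
Fixpoint cov_prefix n : seq T :=
  if n is n'.+1 then rcons (cov_prefix n') (step n' (nth x0 (cov_prefix n')))
  else [:: x0].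

Definition cov_rec n := nth x0 (cov_prefix n) n.

Lemma size_cov_prefix n : size (cov_prefix n) = n.+1.
Proof. by elim: n => [|n IH] //=; rewrite size_rcons IH. Qed.

Lemma nth_cov_prefix n i : (i <= n)%N -> nth x0 (cov_prefix n) i = cov_rec i.
Proof.
elim: n i => [|n IH] i; first by rewrite leqn0 => /eqP ->.
rewrite leq_eqVlt => /orP [/eqP -> //|]; rewrite ltnS => lt_in /=.
by rewrite nth_rcons size_cov_prefix ltnS lt_in IH.
Qed.

Lemma cov_rec0 : cov_rec 0 = x0. Proof. by []. Qed.

Lemma cov_recS n :
    (forall phi psi, (forall i, (i <= n)%N -> phi i = psi i) ->
       step n phi = step n psi) ->
  cov_rec n.+1 = step n cov_rec.
Proof.
move=> step_local; rewrite /cov_rec /= nth_rcons size_cov_prefix ltnn eqxx.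
by apply: step_local => i le_in; rewrite nth_cov_prefix.
Qed.

End CourseOfValues.

Section PowerSeries.
Variable R : idomainType.
Implicit Types (f g h U : powser R) (a b c : R).

Definition comax_indecomposable c := forall a b, c = a * b -> comaximal a b ->
  a \is a GRing.unit \/ b \is a GRing.unit.

Lemma ps_mul_coef0 f g : ps_mul f g 0 = f 0%N * g 0%N.
Proof. by rewrite /ps_mul big_ord_recl big_ord0 addr0. Qed.

Lemma ps_mul_coefS f g n :
  ps_mul f g n.+1 = f 0%N * g n.+1 + \sum_(i < n.+1) f i.+1 * g (n - i)%N.
Proof. by rewrite /ps_mul big_ord_recl subn0. Qed.

Lemma ps_mul_coef1 f g : ps_mul f g 1 = f 0%N * g 1%N + f 1%N * g 0%N.
Proof. by rewrite ps_mul_coefS big_ord_recl big_ord0 addr0. Qed.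

Lemma ps_unitP f : ps_unit f <-> f 0%N \is a GRing.unit.
Proof.
split=> [[g /(_ 0%N)]|f0_unit].
  by rewrite ps_mul_coef0 => fg0; apply/unitrPr; exists (g 0%N).
pose step n (phi : nat -> R) :=
  - (f 0%N)^-1 * \sum_(i < n.+1) f i.+1 * phi (n - i)%N.
exists (cov_rec (f 0%N)^-1 step) => [[|n]].
  by rewrite ps_mul_coef0 cov_rec0 divrr.
rewrite ps_mul_coefS cov_recS; last first.
  move=> phi psi eq_phi; rewrite /step; congr (_ * _); apply: eq_bigr => i _.
  by rewrite eq_phi // leq_subr.
by rewrite /step mulrA mulrN mulrV // mulN1r addNr.
Qed.

Lemma ps_lift_factorization f a b u v : f 0%N = a * b -> u * a + v * b = 1 ->
  exists g h, [/\ ps_eq f (ps_mul g h), g 0%N = a & h 0%N = b].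
Proof.
move=> f0E uvE.
pose step n (phi : nat -> R * R) :=
  let e := f n.+1 - \sum_(i < n) (phi i.+1).1 * (phi (n - i)%N).2 in
  (v * e, u * e).
have step_local n phi psi : (forall i, (i <= n)%N -> phi i = psi i) ->
    step n phi = step n psi.
  move=> eq_phi; rewrite /step; congr (_ , _); congr (_ * (_ - _));
  apply: eq_bigr => i _; rewrite !eq_phi // ?leq_subr //; exact: ltn_ord.
pose r := cov_rec (a, b) step.
exists (fun n => (r n).1), (fun n => (r n).2); split=> // [[|n]].
  by rewrite ps_mul_coef0 /= f0E.
rewrite ps_mul_coefS big_ord_recr /= subnn /r (cov_recS _ (step_local n)) /step /=.
set S := \sum_(i < n) _; set e := f n.+1 - S.
have -> : a * (u * e) + (S + v * e * b) = (u * a + v * b) * e + S by ring.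
by rewrite uvE mul1r /e subrK.
Qed.

Lemma ps_irreducible_coef0 f : ps_irreducible f ->
  f 0%N \isn't a GRing.unit /\ comax_indecomposable (f 0%N).
Proof.
case=> _ [f_nunit f_irr]; split; first by apply/negP => /ps_unitP.
move=> a b f0E [u [v uvE]].
have [g [h [fE <- <-]]] := ps_lift_factorization f0E uvE.
by case: (f_irr _ _ fE) => /ps_unitP; [left | right].
Qed.

Lemma ps_irreducible_of_coef f : f 1%N \is a GRing.unit ->
  f 0%N \isn't a GRing.unit -> comax_indecomposable (f 0%N) -> ps_irreducible f.
Proof.
move=> f1_unit f0_nunit f0_indec; split; [|split].
- by move=> /(_ 1%N) f1E; move: f1_unit; rewrite f1E unitr0.
- by move=> /ps_unitP; apply/negP.
move=> g h fE.
have f0E := fE 0%N; have f1E := fE 1%N.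
rewrite ps_mul_coef0 in f0E; rewrite ps_mul_coef1 in f1E.
have gh_comax : comaximal (g 0%N) (h 0%N).
  exists ((f 1%N)^-1 * h 1%N), ((f 1%N)^-1 * g 1%N).
  by rewrite -!mulrA -mulrDr [h 1%N * _]mulrC -f1E mulVr.
by case: (f0_indec _ _ f0E gh_comax) => /ps_unitP; [left | right].
Qed.

Lemma ps_X_nunit : ~ ps_unit (ps_X R).
Proof. by move=> /ps_unitP; rewrite unitr0. Qed.

Lemma ps_mulX_shift f : f 0%N = 0 -> ps_eq f (ps_mul (fun n => f n.+1) (ps_X R)).
Proof.
move=> f0E [|n]; first by rewrite ps_mul_coef0 f0E mulr0.
rewrite /ps_mul (bigD1 (@Ordinal n.+2 n (leqW (leqnn n.+1)))) //=.
rewrite subSn // subnn /ps_X /= mulr1 big1 ?addr0 // => i /eqP ne_in.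
have /negPf -> : (n.+1 - i)%N != 1%N.
  apply/eqP => E; apply: ne_in; apply: val_inj => /=; have := ltn_ord i; lia.
by rewrite mulr0.
Qed.

Lemma ps_irreducible_coef0_eq0 f : ps_irreducible f -> f 0%N = 0 ->
  ps_assoc f (ps_X R).
Proof.
move=> [_ [_ f_irr]] f0E; have fE := ps_mulX_shift f0E.
by exists (fun n => f n.+1); split=> //; case: (f_irr _ _ fE) => // /ps_X_nunit.
Qed.

Lemma ps_CXU_coef0 c U : ps_add (ps_C c) (ps_mul (ps_X R) U) 0%N = c.
Proof. by rewrite /ps_add ps_mul_coef0 mul0r addr0. Qed.

Lemma ps_irreducible_CXU c U : ps_unit U -> c \isn't a GRing.unit ->
  comax_indecomposable c -> ps_irreducible (ps_add (ps_C c) (ps_mul (ps_X R) U)).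
Proof.
move=> /ps_unitP U0_unit c_nunit c_indec.
apply: ps_irreducible_of_coef; rewrite ?ps_CXU_coef0 //.
by rewrite /ps_add ps_mul_coef1 /= mul0r add0r mul1r add0r.
Qed.

End PowerSeries.

Section Divisibility.
Variable R : idomainType.
Implicit Types a b c d e p q u x y z : R.

Lemma rdvd_refl a : rdvd a a. Proof. by exists 1; rewrite mul1r. Qed.

Lemma rdvd_trans a b c : rdvd a b -> rdvd b c -> rdvd a c.
Proof. by move=> [x ->] [y ->]; exists (y * x); rewrite mulrA. Qed.

Lemma rdvd_mull a b c : rdvd a b -> rdvd a (c * b).
Proof. by move=> [x ->]; exists (c * x); rewrite mulrA. Qed.

Lemma rdvd_mulr a b c : rdvd a b -> rdvd a (b * c).
Proof. by rewrite mulrC; apply: rdvd_mull. Qed.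

Lemma rdvd0 a : rdvd a 0. Proof. by exists 0; rewrite mul0r. Qed.

Lemma rdvdD a x y : rdvd a x -> rdvd a y -> rdvd a (x + y).
Proof. by move=> [k ->] [l ->]; exists (k + l); rewrite mulrDl. Qed.

Lemma unit_rdvd u x : u \is a GRing.unit -> rdvd u x.
Proof. by move=> u_unit; exists (x / u); rewrite mulrVK. Qed.

Lemma rdvd1_unit e : rdvd e 1 -> e \is a GRing.unit.
Proof. by move=> [c ce1]; apply/unitrPr; exists c; rewrite mulrC. Qed.

Lemma rdvd_prod (s : seq R) q : q \in s -> rdvd q (\prod_(p <- s) p).
Proof.
elim: s => [|a s IH] //; rewrite in_cons big_cons => /orP [/eqP ->|/IH].
  by exists (\prod_(p <- s) p); rewrite mulrC.
exact: rdvd_mull.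
Qed.

Lemma rassoc_refl a : rassoc a a.
Proof. by exists 1; rewrite unitr1 mul1r. Qed.

Lemma rassoc_sym a b : rassoc a b -> rassoc b a.
Proof. by move=> [u [u_unit ->]]; exists u^-1; rewrite unitrV u_unit mulKr. Qed.

Lemma rassoc_trans a b c : rassoc a b -> rassoc b c -> rassoc a c.
Proof.
move=> [u [u_unit ->]] [v [v_unit ->]].
by exists (u * v); rewrite unitrM u_unit v_unit mulrA.
Qed.

Lemma rassocM a b c d : rassoc a b -> rassoc c d -> rassoc (a * c) (b * d).
Proof.
move=> [u [u_unit ->]] [v [v_unit ->]].
by exists (u * v); rewrite unitrM u_unit v_unit; split=> //; ring.
Qed.

Lemma rassoc_rdvdl a b : rassoc a b -> rdvd b a.
Proof. by move=> [u [_ ->]]; exists u. Qed.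

Lemma rassoc_rdvdr a b : rassoc a b -> rdvd a b.
Proof. by move/rassoc_sym/rassoc_rdvdl. Qed.

Lemma rassoc1P a : rassoc a 1 <-> a \is a GRing.unit.
Proof.
by split=> [[u [u_unit ->]]|a_unit]; [rewrite mulr1 | exists a; rewrite mulr1].
Qed.

Lemma prime_irreducible p : prime_elt p -> irreducible_elt p.
Proof.
move=> [p_neq0 [p_nunit p_prime]]; split=> //; split=> // b c pE.
have /p_prime [[k kE]|[k kE]] : rdvd p (b * c) by rewrite -pE; apply: rdvd_refl.
- right; apply/unitrPr; exists k; apply: (mulIf p_neq0).
  by rewrite mul1r {2}pE kE; ring.
- left; apply/unitrPr; exists k; apply: (mulIf p_neq0).
  by rewrite mul1r {2}pE kE; ring.
Qed.

Lemma comaximal_sym a b : comaximal a b -> comaximal b a.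
Proof. by move=> [u [v uvE]]; exists v, u; rewrite addrC. Qed.

Lemma comaximalM a b c : comaximal a b -> comaximal a c -> comaximal a (b * c).
Proof.
move=> [u [v uvE]] [u' [v' uvE']].
exists (u * u' * a + u * v' * c + v * u' * b), (v * v').
by rewrite -[1](mulr1 1) -{1}uvE -uvE'; ring.
Qed.

Lemma comaximal_rdvd a b e : comaximal a b -> rdvd e b -> comaximal a e.
Proof. by move=> [u [v uvE]] [k bE]; exists u, (v * k); rewrite -uvE bE mulrA. Qed.

Lemma comaximal1 a : comaximal a 1.
Proof. by exists 0, 1; rewrite mul0r add0r mul1r. Qed.

Lemma comaximal_prod a (s : seq R) : (forall q, q \in s -> comaximal a q) ->
  comaximal a (\prod_(q <- s) q).
Proof.
elim: s => [|q s IH] a_s; first by rewrite big_nil; apply: comaximal1.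
rewrite big_cons; apply: comaximalM; first by apply: a_s; apply: mem_head.
by apply: IH => r r_s; apply: a_s; rewrite in_cons r_s orbT.
Qed.

Lemma prime_rdvd_expr p q n : prime_elt p -> rdvd p (q ^+ n) -> rdvd p q.
Proof.
move=> [_ [p_nunit p_prime]]; elim: n => [|n IH].
  by rewrite expr0 => /rdvd1_unit; rewrite (negPf p_nunit).
by rewrite exprS => /p_prime [].
Qed.

Lemma prime_rdvd_prime_expr p q n : prime_elt p -> prime_elt q ->
  rdvd q (p ^+ n) -> rassoc p q.
Proof.
move=> p_prime q_prime /(prime_rdvd_expr q_prime) [m pE].
have [_ [q_nunit _]] := q_prime; have [_ [_ p_irr]] := prime_irreducible p_prime.
by case: (p_irr _ _ pE) => [m_unit|q_unit]; [exists m | rewrite q_unit in q_nunit].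
Qed.

Lemma rdvd_prime_expr p k e : prime_elt p -> rdvd e (p ^+ k) ->
  exists j, rassoc e (p ^+ j).
Proof.
move=> [p_neq0 [_ p_prime]]; elim: k e => [|k IH] e [g gE].
  by exists 0%N; apply/rassoc1P/rdvd1_unit; exists g; rewrite -gE.
have /p_prime [[g' g'E]|[e' e'E]] : rdvd p (g * e).
- by rewrite -gE exprS; exists (p ^+ k); rewrite mulrC.
- apply: IH; exists g'; apply: (mulIf p_neq0).
  by rewrite -[p ^+ k * p]mulrC -exprS gE g'E; ring.
- have [|j ej] := IH e'.
    exists g; apply: (mulIf p_neq0).
    by rewrite -[p ^+ k * p]mulrC -exprS gE e'E; ring.
  by exists j.+1; rewrite e'E exprS mulrC; apply: rassocM => //; apply: rassoc_refl.
Qed.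

Lemma is_ideal_lincomb a b : is_ideal (fun z => exists s t, z = s * a + t * b).
Proof.
split; first by exists 0, 0; rewrite !mul0r addr0.
split.
  by move=> x y [s [t ->]] [s' [t' ->]]; exists (s + s'), (t + t'); ring.
by move=> r x [s [t ->]]; exists (r * s), (r * t); ring.
Qed.

End Divisibility.

Section PID.
Variable R : idomainType.
Hypothesis R_pid : is_PID R.
Implicit Types a c e p x y z : R.

Lemma pid_acc (a : nat -> R) : (forall n, rdvd (a n.+1) (a n)) ->
  exists k, rdvd (a k) (a k.+1).
Proof.
move=> a_chain.
have a_chain_add k m : rdvd (a (k + m)%N) (a k).
  elim: m => [|m IH]; first by rewrite addn0; apply: rdvd_refl.
  by rewrite addnS; apply: rdvd_trans (a_chain _) IH.
pose I z := exists k, rdvd (a k) z.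
have I_ideal : is_ideal I.
  split; first by exists 0%N; apply: rdvd0.
  split; last by move=> r x [k ak_x]; exists k; apply: rdvd_mull.
  move=> x y [k ak_x] [j aj_y]; exists (k + j)%N; apply: rdvdD.
    exact: rdvd_trans (a_chain_add k j) ak_x.
  by rewrite addnC; apply: rdvd_trans (a_chain_add j k) aj_y.
have [d dP] := R_pid I_ideal.
have [k ak_d] := (proj2 (dP d)) (rdvd_refl d).
by exists k; apply: rdvd_trans ak_d _; apply/dP; exists k.+1; apply: rdvd_refl.
Qed.

(* The generator d of (p, c) divides the irreducible p: either d ~ p, and
   then p | c, or d is a unit. *)
Lemma pid_irreducible_rdvd_or_comaximal p c : irreducible_elt p ->
  rdvd p c \/ comaximal p c.
Proof.
move=> [_ [_ p_irr]].
have [d dP] := R_pid (is_ideal_lincomb p c).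
have [m pE] : rdvd d p by apply/dP; exists 1, 0; ring.
case: (p_irr _ _ pE) => [m_unit|d_unit].
  have [k cE] : rdvd d c by apply/dP; exists 0, 1; ring.
  by left; exists (k / m); rewrite cE pE mulrA mulrVK.
have [s [t stE]] : exists s t, 1 = s * p + t * c by apply/dP; apply: unit_rdvd.
by right; exists s, t.
Qed.

Lemma pid_irreducible_prime p : irreducible_elt p -> prime_elt p.
Proof.
move=> p_irr; have [p_neq0 [p_nunit _]] := p_irr.
split=> //; split=> // x y [c xyE].
case: (pid_irreducible_rdvd_or_comaximal x p_irr) => [|[s [t stE]]]; first by left.
right; exists (s * y + t * c).
rewrite -[y in LHS]mul1r -stE mulrDl -[t * x * y]mulrA xyE; ring.
Qed.

Lemma pid_prime_rdvd x : x != 0 -> x \isn't a GRing.unit ->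
  exists p, prime_elt p /\ rdvd p x.
Proof.
move=> x_neq0 x_nunit; apply: NNPP => no_prime.
pose proper_split (a b : R) :=
  exists c, [/\ a = b * c, b \isn't a GRing.unit & c \isn't a GRing.unit].
pose step a := epsilon (inhabits (0 : R)) (proper_split a).
pose s n := iter n step x.
have stepP a : a != 0 -> a \isn't a GRing.unit -> rdvd a x ->
    proper_split a (step a).
  move=> a_neq0 a_nunit a_x; apply: epsilon_spec; apply: NNPP => a_atom.
  apply: no_prime; exists a; split=> //; apply: pid_irreducible_prime.
  split=> //; split=> // b c aE.
  case: (boolP (b \is a GRing.unit)) => [|b_nunit]; first by left.
  case: (boolP (c \is a GRing.unit)) => [|c_nunit]; first by right.
  by exfalso; apply: a_atom; exists b, c.
(* by induction, every s n is a nonzero nonunit divisor of x, so the chain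
   s 0, s 1, ... never stabilises, against the ACC *)
have sP n : [/\ s n != 0, s n \isn't a GRing.unit & rdvd (s n) x].
  elim: n => [|n [sn_neq0 sn_nunit sn_x]]; first by split=> //; apply: rdvd_refl.
  have [c [snE sSn_nunit _]] := stepP _ sn_neq0 sn_nunit sn_x.
  split=> //.
    by apply: contraNneq sn_neq0; rewrite snE /s /= => ->; rewrite mul0r.
  by apply: rdvd_trans sn_x; exists c; rewrite {1}snE mulrC.
have [k [e skE]] : exists k, rdvd (s k) (s k.+1).
  apply: pid_acc => n; have [sn_neq0 sn_nunit sn_x] := sP n.
  by have [c [snE _ _]] := stepP _ sn_neq0 sn_nunit sn_x; exists c; rewrite {1}snE mulrC.
have [sk_neq0 sk_nunit sk_x] := sP k.
have [c [snE _ /negP]] := stepP _ sk_neq0 sk_nunit sk_x; apply.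
apply/unitrPr; exists e; apply: (mulIf sk_neq0).
by rewrite mul1r {2}snE; change (step (s k)) with (s k.+1); rewrite skE; ring.
Qed.

Lemma pid_comax_indecomposable x : x != 0 -> x \isn't a GRing.unit ->
  comax_indecomposable x -> exists p n, prime_elt p /\ rassoc x (p ^+ n).
Proof.
move=> x_neq0 x_nunit x_indec.
have [p [p_prime p_x]] := pid_prime_rdvd x_neq0 x_nunit.
have [_ [p_nunit _]] := p_prime.
pose I z := exists k, rdvd x (z * p ^+ k).
have I_ideal : is_ideal I.
  split; first by exists 0%N; rewrite mul0r; apply: rdvd0.
  split; last by move=> r z [k x_zp]; exists k; rewrite -mulrA; apply: rdvd_mull.
  move=> z w [k x_zp] [j x_wp]; exists (k + j)%N.
  have -> : (z + w) * p ^+ (k + j) = z * p ^+ k * p ^+ j + w * p ^+ j * p ^+ k.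
    by rewrite exprD; ring.
  by apply: rdvdD; apply: rdvd_mulr.
have [c cP] := R_pid I_ideal.
have [e xE] : rdvd c x by apply/cP; exists 0%N; rewrite expr0 mulr1; apply: rdvd_refl.
have c_neq0 : c != 0 by apply: contraNneq x_neq0; rewrite xE => ->; rewrite mulr0.
have [k [g gE]] : I c by apply/cP; apply: rdvd_refl.
have pkE : p ^+ k = g * e by apply: (mulIf c_neq0); rewrite mulrC gE xE mulrA.
have p_ndvd_c : ~ rdvd p c.
  move=> [c' cE]; have [h c'E] : rdvd c c'.
    by apply/cP; exists k.+1, g; rewrite -gE cE exprS; ring.
  move/negP: p_nunit; apply; apply/unitrPr; exists h; apply: (mulIf c_neq0).
  by rewrite mul1r {2}cE c'E; ring.
have c_p : comaximal c p.
  apply: comaximal_sym.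
  by case: (pid_irreducible_rdvd_or_comaximal c (prime_irreducible p_prime)).
have c_pk : comaximal c (p ^+ k).
  elim: (k) => [|j IH]; first by rewrite expr0; apply: comaximal1.
  by rewrite exprS; apply: comaximalM.
have c_e : comaximal c e by apply: comaximal_rdvd c_pk _; exists g.
have [c_unit|e_unit] := x_indec c e (etrans xE (mulrC e c)) c_e.
  have [j ej] := rdvd_prime_expr p_prime (ex_intro _ g pkE).
  by exists p, j; split=> //; apply: rassoc_trans ej; exists c; rewrite xE mulrC.
by case: p_ndvd_c; apply: rdvd_trans p_x _; exists e^-1; rewrite xE mulKr.
Qed.

End PID.

Section UFD.
Variable R : idomainType.
Hypothesis R_ufd : is_UFD R.
Implicit Types a b c d g m p q x y : R.

Lemma ufd_factor a : a != 0 -> exists s, all_irr s /\ rassoc a (\prod_(p <- s) p).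
Proof.
move=> a_neq0; case: (boolP (a \is a GRing.unit)) => [a_unit|a_nunit].
  by exists [::]; rewrite big_nil; split=> //; apply/rassoc1P.
have [s [s_irr ->]] := R_ufd.1 a a_neq0 a_nunit.
by exists s; split=> //; apply: rassoc_refl.
Qed.

Lemma all_irr_cat (s t : seq R) : all_irr s -> all_irr t -> all_irr (s ++ t).
Proof. by move=> s_irr t_irr q; rewrite mem_cat => /orP [/s_irr|/t_irr]. Qed.

(* p times the factors of c is a factorization of x y, so p is associate to
   a factor of x or of y *)
Lemma ufd_irreducible_prime p : irreducible_elt p -> prime_elt p.
Proof.
move=> p_irr; have [p_neq0 [p_nunit _]] := p_irr.
split=> //; split=> // x y [c xyE].
have [->|x_neq0] := eqVneq x 0; first by left; apply: rdvd0.
have [->|y_neq0] := eqVneq y 0; first by right; apply: rdvd0.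
have c_neq0 : c != 0.
  by apply: contraNneq (mulf_neq0 x_neq0 y_neq0) => c0; rewrite xyE c0 mul0r.
have [s [s_irr xs]] := ufd_factor x_neq0.
have [t [t_irr yt]] := ufd_factor y_neq0.
have [r [r_irr cr]] := ufd_factor c_neq0.
have rp_irr : all_irr (r ++ [:: p]).
  by apply: all_irr_cat => // q; rewrite inE => /eqP ->.
have rp_st : rassoc (\prod_(q <- r ++ [:: p]) q) (\prod_(q <- s ++ t) q).
  rewrite !big_cat big_seq1 /=; apply: (@rassoc_trans _ _ (c * p)).
    by apply: rassocM; [apply: rassoc_sym | apply: rassoc_refl].
  by rewrite -xyE; apply: rassocM.
have [_ [sigma [_ sigmaP]]] := R_ufd.2 _ _ rp_irr (all_irr_cat s_irr t_irr) rp_st.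
have lt_r : (size r < size (r ++ [:: p]))%N by rewrite size_cat addn1.
have := sigmaP (Ordinal lt_r); rewrite /= nth_cat ltnn subnn /=.
set q := nth 0 (s ++ t) _ => pq.
have : q \in s ++ t by apply: mem_nth; apply: ltn_ord.
rewrite mem_cat => /orP [q_s|q_t]; [left|right];
  apply: rdvd_trans (rassoc_rdvdr pq) _.
  exact: rdvd_trans (rdvd_prod q_s) (rassoc_rdvdl xs).
exact: rdvd_trans (rdvd_prod q_t) (rassoc_rdvdl yt).
Qed.

Lemma ufd_size_proper_rdvd d s g t m : all_irr s -> all_irr t ->
    rassoc d (\prod_(p <- s) p) -> rassoc g (\prod_(p <- t) p) ->
  d = m * g -> m != 0 -> m \isn't a GRing.unit -> (size t < size s)%N.
Proof.
move=> s_irr t_irr ds gt dE m_neq0 m_nunit.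
have [tm [tm_irr m_tm]] := ufd_factor m_neq0.
have s_ttm : rassoc (\prod_(p <- s) p) (\prod_(p <- t ++ tm) p).
  apply: rassoc_trans (rassoc_sym ds) _.
  by rewrite big_cat dE mulrC; apply: rassocM.
have [-> _] := R_ufd.2 _ _ s_irr (all_irr_cat t_irr tm_irr) s_ttm.
case: tm {tm_irr s_ttm} m_tm => [|q tm] m_tm.
  by rewrite big_nil in m_tm; move/rassoc1P: m_tm; rewrite (negPf m_nunit).
by rewrite size_cat /= addnS ltnS leq_addr.
Qed.

Section ComaximalPrimes.
Hypothesis primes_comaximal : forall pi sg : R, prime_elt pi -> prime_elt sg ->
  ~ rassoc pi sg -> comaximal pi sg.

Lemma ufd_comaximal_of_ndvd p b : irreducible_elt p -> ~ rdvd p b -> comaximal p b.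
Proof.
move=> p_irr p_ndvd_b.
have b_neq0 : b != 0 by apply: contra_not_neq p_ndvd_b => ->; apply: rdvd0.
have [t [t_irr bt]] := ufd_factor b_neq0.
apply: comaximal_rdvd (rassoc_rdvdr bt); apply: comaximal_prod => q q_t.
apply: primes_comaximal; try apply: ufd_irreducible_prime; first exact: p_irr.
  exact: t_irr.
move/rassoc_rdvdr => p_q; apply: p_ndvd_b; apply: rdvd_trans p_q _.
exact: rdvd_trans (rdvd_prod q_t) (rassoc_rdvdl bt).
Qed.

(* By induction on the factorization of a: strip a factor p of a, and of b
   too when p | b; otherwise p is comaximal with b and can be dropped. *)
Lemma ufd_bezout s : all_irr s -> forall a b, rassoc a (\prod_(p <- s) p) ->
  exists g, [/\ rdvd g a, rdvd g b & exists u v, g = u * a + v * b].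
Proof.
elim: s => [|p s IH] ps_irr a b.
  rewrite big_nil => /rassoc1P a_unit.
  by exists a; split; [apply: rdvd_refl | apply: unit_rdvd | exists 1, 0; ring].
move=> [w [w_unit aE]]; rewrite big_cons in aE.
set a' := w * \prod_(q <- s) q.
have a'E : a = p * a' by rewrite aE /a'; ring.
have a's : rassoc a' (\prod_(q <- s) q) by exists w.
have s_irr : all_irr s by move=> r r_s; apply: ps_irr; rewrite in_cons r_s orbT.
have p_irr : irreducible_elt p by apply: ps_irr; apply: mem_head.
case: (classic (rdvd p b)) => [[b' b'E]|p_ndvd_b].
  have [g [[k kE] [l lE] [u [v gE]]]] := IH s_irr a' b' a's.
  exists (p * g); split.
  - by exists k; rewrite a'E kE; ring.
  - by exists l; rewrite b'E lE; ring.
  - by exists u, v; rewrite gE a'E b'E; ring.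
have [s2 [t2 s2t2E]] := ufd_comaximal_of_ndvd p_irr p_ndvd_b.
have [g [g_a' g_b [u [v gE]]]] := IH s_irr a' b a's.
exists g; split=> //; first by rewrite a'E; apply: rdvd_mull.
exists (u * s2), (u * a' * t2 + v).
rewrite gE a'E -[u * a' in LHS]mulr1 -s2t2E; ring.
Qed.

Lemma ufd_pid : is_PID R.
Proof.
move=> I [I0 [ID IM]].
case: (classic (exists d, I d /\ d != 0)) => [[d [I_d d_neq0]]|I_eq0]; last first.
  exists 0 => x; split; last by move=> [c ->]; rewrite mulr0.
  have [->|x_neq0 Ix] := eqVneq x 0; first by move=> _; apply: rdvd0.
  by case: I_eq0; exists x.
have [s [s_irr ds]] := ufd_factor d_neq0.
(* induction on the number of irreducible factors of some nonzero d in I *)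
suff : forall n d s, I d -> d != 0 -> all_irr s -> (size s < n)%N ->
    rassoc d (\prod_(p <- s) p) -> exists a, forall x, I x <-> rdvd a x.
  by move/(_ (size s).+1 d s I_d d_neq0 s_irr (ltnSn _) ds).
clear d s I_d d_neq0 s_irr ds.
elim=> [|n IH] d s I_d d_neq0 s_irr lt_sn ds; first by [].
case: (classic (forall x, I x -> rdvd d x)) => [d_I|].
  by exists d => x; split; [apply: d_I | move=> [c ->]; apply: IM].
move=> /not_all_ex_not [x x_ndvd].
have [Ix d_ndvd_x] := imply_to_and _ _ x_ndvd.
have [g [[m dE] g_x [u [v gE]]]] := ufd_bezout s_irr x ds.
have I_g : I g by rewrite gE; apply: ID; apply: IM.
have g_neq0 : g != 0 by apply: contraNneq d_neq0; rewrite dE => ->; rewrite mulr0.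
have m_neq0 : m != 0 by apply: contraNneq d_neq0; rewrite dE => ->; rewrite mul0r.
have m_nunit : m \isn't a GRing.unit.
  apply/negP => m_unit; apply: d_ndvd_x; apply: rdvd_trans g_x.
  by exists m^-1; rewrite dE mulKr.
have [t [t_irr gt]] := ufd_factor g_neq0.
apply: (IH g t) => //.
exact: leq_trans (ufd_size_proper_rdvd s_irr t_irr ds gt dE m_neq0 m_nunit) _.
Qed.
End ComaximalPrimes.

Lemma ufd_not_pid_primes : ~ is_PID R -> exists pi sg : R,
  [/\ prime_elt pi, prime_elt sg, ~ rassoc pi sg & ~ comaximal pi sg].
Proof.
move=> not_pid; apply: NNPP => no_primes; apply: not_pid; apply: ufd_pid.
move=> pi sg pi_prime sg_prime pi_sg; apply: NNPP => not_comax.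
by apply: no_primes; exists pi, sg.
Qed.
End UFD.

Section PrimeProduct.
Variable R : idomainType.
Implicit Types pi sg : R.

Lemma prime_mul_comax_indecomposable pi sg : prime_elt pi -> irreducible_elt sg ->
  ~ comaximal pi sg -> comax_indecomposable (pi * sg).
Proof.
move=> [pi_neq0 [_ pi_prime]] [_ [_ sg_irr]] pi_sg a b abE ab_comax.
wlog [a' aE] : a b abE ab_comax / rdvd pi a.
  move=> sym; have /pi_prime [] : rdvd pi (a * b) by exists sg; rewrite -abE mulrC.
    exact: sym.
  move=> pi_b; rewrite or_comm; apply: sym (comaximal_sym ab_comax) pi_b.
  by rewrite abE mulrC.
have sgE : sg = a' * b by apply: (mulfI pi_neq0); rewrite abE aE; ring.
case: (sg_irr _ _ sgE) => [a'_unit|]; last by right.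
case: pi_sg; have [u [v uvE]] := ab_comax.
by exists (u * a'), (v / a'); rewrite -uvE aE sgE mulrA divrK // mulrA.
Qed.

Lemma prime_mul_not_rassoc_expr pi sg : prime_elt pi -> prime_elt sg ->
  ~ rassoc pi sg -> ~ exists p n, prime_elt p /\ rassoc (pi * sg) (p ^+ n).
Proof.
move=> pi_prime sg_prime pi_sg [p [n [p_prime pisg_pn]]].
have pn := rassoc_rdvdr pisg_pn.
have pi_pn := rdvd_trans (rdvd_mulr sg (rdvd_refl pi)) pn.
have sg_pn := rdvd_trans (rdvd_mull pi (rdvd_refl sg)) pn.
have p_pi := prime_rdvd_prime_expr p_prime pi_prime pi_pn.
have p_sg := prime_rdvd_prime_expr p_prime sg_prime sg_pn.
exact: pi_sg (rassoc_trans (rassoc_sym p_pi) p_sg).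
Qed.

Lemma ps_irreducible_prime_mul_CXU pi sg U : prime_elt pi -> prime_elt sg ->
    ~ comaximal pi sg -> ps_unit U ->
  ps_irreducible (ps_add (ps_C (pi * sg)) (ps_mul (ps_X R) U)).
Proof.
move=> pi_prime sg_prime pi_sg U_unit; apply: ps_irreducible_CXU => //.
  by rewrite unitrM; case: pi_prime => _ [/negPf ->].
exact: prime_mul_comax_indecomposable (prime_irreducible sg_prime) pi_sg.
Qed.

End PrimeProduct.

Theorem corollary2p3 (R : idomainType) :
  (forall f : powser R, ps_irreducible f ->
     f 0%N \isn't a GRing.unit /\
     (forall a b : R, f 0%N = a * b -> comaximal a b ->
        a \is a GRing.unit \/ b \is a GRing.unit)) /\
  (forall f : powser R, f 1%N \is a GRing.unit -> f 0%N \isn't a GRing.unit ->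
     (forall a b : R, f 0%N = a * b -> comaximal a b ->
        a \is a GRing.unit \/ b \is a GRing.unit) ->
     ps_irreducible f) /\
  (is_PID R -> forall f : powser R, ps_irreducible f ->
     ps_assoc f (ps_X R) \/
     exists (p : R) (n : nat), prime_elt p /\ rassoc (f 0%N) (p ^+ n)) /\
  (is_UFD R -> ~ is_PID R ->
     (exists f : powser R, ps_irreducible f /\ f 0%N != 0 /\
        ~ exists (p : R) (n : nat), prime_elt p /\ rassoc (f 0%N) (p ^+ n)) /\
     (forall pi sg : R, prime_elt pi -> prime_elt sg -> ~ rassoc pi sg ->
        ~ comaximal pi sg ->
        forall U : powser R, ps_unit U ->
          ps_irreducible (ps_add (ps_C (pi * sg)) (ps_mul (ps_X R) U)))).
Proof.
split; first exact: ps_irreducible_coef0.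
split; first exact: ps_irreducible_of_coef.
split.
  move=> R_pid f f_irr; have [f0_eq0|f0_neq0] := eqVneq (f 0%N) 0.
    by left; apply: ps_irreducible_coef0_eq0.
  have [f0_nunit f0_indec] := ps_irreducible_coef0 f_irr.
  by right; apply: pid_comax_indecomposable.
move=> R_ufd not_pid; split; last first.
  by move=> pi sg pi_prime sg_prime _ pi_sg U;
     apply: ps_irreducible_prime_mul_CXU.
have [pi [sg [pi_prime sg_prime pi_sg not_comax]]] :=
  ufd_not_pid_primes R_ufd not_pid.
have one_unit : ps_unit (ps_one R) by apply/ps_unitP; rewrite unitr1.
exists (ps_add (ps_C (pi * sg)) (ps_mul (ps_X R) (ps_one R))); rewrite ps_CXU_coef0.
split; first exact: ps_irreducible_prime_mul_CXU.
split; last exact: prime_mul_not_rassoc_expr.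
by apply: mulf_neq0; [case: pi_prime | case: sg_prime].
Qed.
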